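(* Let $\Sigma=(X,U,F)$ be a system and $Q\subset X$ be controlled invariant. For every quasi-invariant-partition $(\mathcal{A},G)$ of $Q$ there exists an invariant partition $(\mathcal{A}',G')$ of $Q$ such that $\sharp\mathcal{A}=\sharp\mathcal{A}'$ and $h_{inv}(\mathcal{A}',G')\le h_{inv}(\mathcal{A},G)$.
   Context: A system is a triple $\Sigma=(X,U,F)$ where $X,U$ are nonempty sets and $F:X\times U\rightrightarrows X$ is a set-valued map with $F(x,u)\neq\emptyset$ for all $(x,u)$; for $A\subset X$, $F(A,u)=\bigcup_{x\in A}F(x,u)$. $Q\subset X$ is controlled invariant if for every $x\in Q$ there is $u\in U$ with $F(x,u)\subset Q$. An invariant cover of $Q$ is a pair $(\mathcal{A},G)$ where $\mathcal{A}$ is a finite cover of $Q$ (by subsets of $Q$) and $G:\mathcal{A}\to U$ satisfies $F(A,G(A))\subset Q$ for all $A\in\mathcal{A}$. For $\mathcal{S}\subset\mathcal{A}^n$, $\alpha=\alpha(0)\cdots\alpha(n-1)\in\mathcal{S}$ and integer $0\le t<n-1$, let $P(\alpha|_{[0,t]})=\{A\in\mathcal{A}:\exists\hat\alpha\in\mathcal{S},\ \hat\alpha|_{[0,t]}=\alpha|_{[0,t]},\ A=\hat\alpha(t+1)\}$, and $P(\alpha|_{[0,n-1]})=P(\alpha)=\{\hat\alpha(0):\hat\alpha\in\mathcal{S}\}$. $\mathcal{S}$ is $(n,Q)$-spanning in $(\mathcal{A},G)$ if (1) the elements of $P(\alpha)$ cover $Q$, and (2) for every $\alpha\in\mathcal{S}$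 and $0\le t<n-1$, $F(\alpha(t),G(\alpha(t)))\subset\bigcup_{A'\in P(\alpha|_{[0,t]})}A'$. Let $N(\mathcal{S})=\max_{\alpha\in\mathcal{S}}\prod_{t=0}^{n-1}\sharp P(\alpha|_{[0,t]})$, $r_{inv}(n,Q,\mathcal{A},G)=\min\{N(\mathcal{S}):\mathcal{S}\ (n,Q)\text{-spanning in }(\mathcal{A},G)\}$, and $h_{inv}(\mathcal{A},G)=\lim_{n\to\infty}\frac1n\log r_{inv}(n,Q,\mathcal{A},G)$ ($\log$ base $2$). For $A\in\mathcal{A}$: $D(A)=\{A'\in\mathcal{A}:F(A,G(A))\cap A'\neq\emptyset\}$. An invariant cover $(\mathcal{A},G)$ is a quasi-invariant-partition of $Q$ if $A\setminus\bigcup_{B\in\mathcal{A},B\neq A}B\neq\emptyset$ for all $A\in\mathcal{A}$, and $F(A,G(A))\cap\big(B\setminus\bigcup_{C\in D(A),C\neq B}C\big)\neq\emptyset$ for all $A\in\mathcal{A}$ and $B\in D(A)$. It is an invariant partition of $Q$ if $\mathcal{A}$ is a partition of $Q$. *)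

From HB Require Import structures.
From mathcomp Require Import all_boot all_order all_algebra.
From mathcomp Require Import all_classical all_reals all_analysis.
From Stdlib Require List.
Set Implicit Arguments. Unset Strict Implicit. Unset Printing Implicit Defensive.
Import Order.TTheory GRing.Theory Num.Theory.
Import numFieldNormedType.Exports.
Local Open Scope classical_set_scope.

Section Defs.
Variables (X U : Type) (F : X -> U -> set X) (Q : set X).

Definition controlled_invariant : Prop :=
  forall x, Q x -> exists u, F x u `<=` Q.

Definition Fset (A : set X) (u : U) : set X := \bigcup_(x in A) F x u.

(* A finite family of subsets of X, represented by a duplicate-free list. *)
Definition inA (cA : seq (set X)) : set (set X) := [set A | List.In A cA].

Definition invariant_cover (cA : seq (set X)) (G : set X -> U) : Prop :=
  [/\ List.NoDup cA,
      (forall A, List.In A cA -> A `<=` Q),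
      Q `<=` \bigcup_(A in inA cA) A &
      (forall A, List.In A cA -> Fset A (G A) `<=` Q)].

Definition Dset (cA : seq (set X)) (G : set X -> U) (A : set X) : set (set X) :=
  [set A' | List.In A' cA /\ Fset A (G A) `&` A' !=set0].

Definition quasi_invariant_partition (cA : seq (set X)) (G : set X -> U) : Prop :=
  [/\ invariant_cover cA G,
      (forall A, List.In A cA ->
         A `\` \bigcup_(B in [set B | List.In B cA /\ B <> A]) B !=set0) &
      (forall A B, List.In A cA -> Dset cA G A B ->
         Fset A (G A) `&`
           (B `\` \bigcup_(C in [set C | Dset cA G A C /\ C <> B]) C) !=set0)].

Definition invariant_partition (cA : seq (set X)) (G : set X -> U) : Prop :=
  [/\ invariant_cover cA G,
      (forall A, List.In A cA -> A !=set0) &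
      (forall A B, List.In A cA -> List.In B cA -> A <> B -> A `&` B = set0)].

Definition cardP (cA : seq (set X)) (P : set (set X)) : nat :=
  size (seq.filter (fun A => `[< P A >]) cA).

Section Spanning.
Variables (cA : seq (set X)) (G : set X -> U) (n : nat).

Definition Pt (S : set (seq (set X))) (a : seq (set X)) (t : nat) : set (set X) :=
  [set A | List.In A cA /\ exists b, S b /\ take t.+1 b = take t.+1 a
                                    /\ A = nth set0 b t.+1].

Definition Pfull (S : set (seq (set X))) : set (set X) :=
  [set A | List.In A cA /\ exists b, S b /\ A = nth set0 b 0].

Definition Pidx (S : set (seq (set X))) (a : seq (set X)) (t : nat) : set (set X) :=
  if t == n.-1 then Pfull S else Pt S a t.

Definition spanning (S : set (seq (set X))) : Prop :=
  [/\ (forall a, S a -> size a = n /\ forall A, List.In A a -> List.In A cA),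
      Q `<=` \bigcup_(A in Pfull S) A &
      (forall a t, S a -> (t < n.-1)%N ->
         Fset (nth set0 a t) (G (nth set0 a t)) `<=` \bigcup_(A in Pt S a t) A)].

Definition prodP (S : set (seq (set X))) (a : seq (set X)) : nat :=
  (\prod_(t < n) cardP cA (Pidx S a t))%N.

(* N(S) = max over alpha in S (0 if S is empty) *)
Definition NS (S : set (seq (set X))) : nat :=
  xget 0%N [set k | (exists a, S a /\ k = prodP S a) /\
                    forall a, S a -> (prodP S a <= k)%N].

Definition r_inv : nat :=
  xget 0%N [set k | (exists S, spanning S /\ k = NS S) /\
                    forall S, spanning S -> (k <= NS S)%N].
End Spanning.

Definition h_inv (R : realType) (cA : seq (set X)) (G : set X -> U) : R :=
  limn ((fun n : nat => (ln ((r_inv cA G n)%:R : R) / ln 2 / n%:R)%R) : R^nat).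

End Defs.

(* In a quasi-invariant partition every block A contains a point
   lying in no other block, and every successor B in D(A) contains such a
   private point inside F(A, G(A)).  Hence an (n,Q)-spanning set must contain
   every D-path of length n, with P(alpha) = all blocks and
   P(alpha|[0,t]) containing D(alpha(t)); conversely the set of all D-paths is
   spanning.  This gives r_inv(n+1) = #A * max over D-paths alpha of
   prod_(t<n) #D(alpha(t)), a submultiplicative sequence, so by Fekete's lemma
   h_inv is a genuine limit.  Assigning each point of Q to one chosen block
   containing it shrinks every block to a "core"; the cores form a partition of
   the same size that keeps all private points, it is again quasi-invariant, and
   its transition relation is contained in that of A, so the path weights and
   hence h_inv can only decrease. *)

From HB Require Import structures.
From mathcomp Require Import all_boot all_order all_algebra.
From mathcomp Require Import all_classical all_reals all_analysis.
From mathcomp Require Import zify lra.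
From Stdlib Require List.
Import Order.TTheory GRing.Theory Num.Theory numFieldNormedType.Exports.
Set Implicit Arguments. Unset Strict Implicit. Unset Printing Implicit Defensive.
Local Open Scope classical_set_scope.

Section Fekete.
Variables (R : realType) (v : nat -> R).
Local Open Scope ring_scope.
Hypothesis v_ge0 : forall n, 0 <= v n.
Hypothesis v_subadd : forall n m, (0 < n)%N -> (0 < m)%N -> v (n + m)%N <= v n + v m.

Lemma subadd_mulnD q m r : (0 < m)%N -> v (q * m + r)%N <= q%:R * v m + v r.
Proof.
move=> m_gt0; elim: q => [|q IH]; first by rewrite mul0n add0n mul0r add0r.
have v_subaddl a : v (m + a)%N <= v m + v a.
  have [->|a_gt0] := posnP a; first by rewrite addn0 lerDl.
  exact: v_subadd.
rewrite mulSn -addnA -[q.+1]addn1 natrD mulrDl mul1r.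
apply: le_trans (v_subaddl _) _; lra.
Qed.

Lemma subadd_ratio_le m n : (0 < m)%N -> (0 < n)%N ->
  v n / n%:R <= v m / m%:R + (\sum_(r < m) v r) / n%:R.
Proof.
move=> m_gt0 n_gt0; have n_pos : 0 < n%:R :> R by rewrite ltr0n.
have m_pos : 0 < m%:R :> R by rewrite ltr0n.
rewrite -(ler_pM2r n_pos) mulrDl !mulfVK ?gt_eqF //.
rewrite {1}(divn_eq n m); apply: le_trans (subadd_mulnD _ _ m_gt0) _.
apply: lerD.
  rewrite [X in _ <= X]mulrAC -mulrA [X in X <= _]mulrC ler_wpM2l //.
  by rewrite ler_pdivlMr // -natrM ler_nat leq_divM.
by rewrite (bigD1 (Ordinal (ltn_pmod n m_gt0))) //= lerDl sumr_ge0.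
Qed.

Lemma fekete : cvgn ((fun n => v n / n%:R) : R^nat).
Proof.
pose E := [set x : R | exists2 n, (0 < n)%N & x = v n / n%:R].
have E_lb : has_lbound E by exists 0 => x [n _ ->]; rewrite divr_ge0.
have E_inf : has_inf E by split => //; exists (v 1%N / 1%:R); exists 1%N.
apply/cvg_ex; exists (inf E); apply/cvgrPdist_lt => e e_gt0.
have e2_gt0 : 0 < e / 2 by rewrite divr_gt0.
have [_ [m m_gt0 ->] vm_lt] := inf_adherent e2_gt0 E_inf.
set C := \sum_(r < m) v r.
have C_ge0 : 0 <= C by rewrite sumr_ge0.
exists (Num.Def.archi_bound (C / (e / 2))).+1 => // n /= n_big.
have n_gt0 : (0 < n)%N by apply: leq_trans n_big.
have inf_le : inf E <= v n / n%:R by apply: (ge_inf E_lb); exists n.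
rewrite distrC ger0_norm ?subr_ge0 //.
have C_small : C / n%:R < e / 2.
  rewrite ltr_pdivrMr ?ltr0n // mulrC -ltr_pdivrMr //.
  apply: lt_le_trans (archi_boundP (divr_ge0 C_ge0 (ltW e2_gt0))) _.
  by rewrite ler_nat ltnW.
have := subadd_ratio_le m_gt0 n_gt0; rewrite -/C; lra.
Qed.

End Fekete.

Definition submultiplicative (s : nat -> nat) :=
  forall n m, (0 < n)%N -> (0 < m)%N -> (s (n + m) <= s n * s m)%N.

Definition log2_rate (R : realType) (s : nat -> nat) : R^nat :=
  fun n => (ln ((s n)%:R : R) / ln 2 / n%:R)%R.

Section GrowthRate.
Variable R : realType.
Local Open Scope ring_scope.

Let ln2_gt0 : 0 < ln (2 : R). Proof. by rewrite ln_gt0 // ltr1n. Qed.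

Lemma log2_rate_cvg (s : nat -> nat) :
  (forall n, (0 < n)%N -> (0 < s n)%N) -> submultiplicative s ->
  cvgn (log2_rate R s).
Proof.
move=> s_gt0 s_submul.
have s_pos n : (0 < n)%N -> 0 < (s n)%:R :> R by move/s_gt0; rewrite ltr0n.
apply: (@fekete R (fun n => ln ((s n)%:R : R) / ln 2)) => [n|n m n_gt0 m_gt0].
  rewrite divr_ge0 ?(ltW ln2_gt0) //.
  have [->|sn_gt0] := posnP (s n); first by rewrite ln0.
  by rewrite ln_ge0 // ler1n.
rewrite -mulrDl ler_pM2r ?invr_gt0 // -lnM ?posrE ?s_pos //.
rewrite ler_ln ?posrE ?mulr_gt0 ?s_pos ?addn_gt0 ?n_gt0 //.
by rewrite -natrM ler_nat s_submul.
Qed.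

Lemma log2_rate_lim_le (s s' : nat -> nat) :
  (forall n, (0 < n)%N -> (0 < s n)%N) -> submultiplicative s ->
  (forall n, (0 < n)%N -> (0 < s' n)%N) -> submultiplicative s' ->
  (forall n, (0 < n)%N -> (s' n <= s n)%N) ->
  limn (log2_rate R s') <= limn (log2_rate R s).
Proof.
move=> s_gt0 s_submul s'_gt0 s'_submul s'_le.
apply: ler_lim; [exact: log2_rate_cvg|exact: log2_rate_cvg|].
exists 1%N => // n /= n_gt0.
rewrite /log2_rate !ler_pM2r ?invr_gt0 ?ltr0n //.
by rewrite ler_ln ?posrE ?ltr0n ?s_gt0 ?s'_gt0 // ler_nat s'_le.
Qed.

End GrowthRate.

Lemma InP (T : eqType) (x : T) (s : seq T) : reflect (List.In x s) (x \in s).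
Proof.
elim: s => [|y s IH] /=; first by constructor.
rewrite in_cons; apply: (iffP orP) => [[/eqP ->|/IH]|[->|/IH]]; by [left|right].
Qed.

Lemma bigmax_seq_attained (I : eqType) (r : seq I) (P : pred I) (F : I -> nat) :
  has P r -> exists i, [/\ i \in r, P i & \max_(j <- r | P j) F j = F i].
Proof.
move=> /hasP [i0 i0_r P_i0].
pose K m := m = 0 \/ exists i, [/\ i \in r, P i & m = F i].
suff [max0|//] : K (\max_(j <- r | P j) F j).
  exists i0; split => //; rewrite max0.
  by have := @leq_bigmax_seq _ _ _ F _ i0_r P_i0; rewrite max0 leqn0 => /eqP.
rewrite big_seq_cond; elim/big_ind: _ => [|m1 m2 K1 K2|i /andP[i_r Pi]].
- by left.
- by rewrite /maxn; case: ifP.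
- by right; exists i.
Qed.

Lemma neq_nil_In (T : eqType) (s : seq T) : s != [::] -> exists x, List.In x s.
Proof. by case: s => // x s _; exists x; left. Qed.

(* [NS] and [r_inv] are [xget] of exactly these predicates. *)
Section ExtremalValues.
Variables (T : Type) (P : set T) (f : T -> nat).

Definition is_max_of (k : nat) := (exists a, P a /\ k = f a) /\ forall a, P a -> f a <= k.
Definition is_min_of (k : nat) := (exists a, P a /\ k = f a) /\ forall a, P a -> k <= f a.

Hypothesis P_nonempty : exists a, P a.
Let P_value : exists k, `[< exists a, P a /\ k = f a >].
Proof. by have [a Pa] := P_nonempty; exists (f a); apply/asboolP; exists a. Qed.

Lemma is_max_of_xget m : (forall a, P a -> f a <= m) -> is_max_of (xget 0 is_max_of).
Proof.
move=> f_le; apply: xgetPex.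
have f_ub k : `[< exists a, P a /\ k = f a >] -> k <= m.
  by move/asboolP => [a [Pa ->]]; apply: f_le.
case: (ex_maxnP P_value f_ub) => k /asboolP k_val k_max.
by exists k; split => // a Pa; apply: k_max; apply/asboolP; exists a.
Qed.

Lemma is_min_of_xget : is_min_of (xget 0 is_min_of).
Proof.
apply: xgetPex; case: (ex_minnP P_value) => k /asboolP k_val k_min.
by exists k; split => // a Pa; apply: k_min; apply/asboolP; exists a.
Qed.

End ExtremalValues.

Section Counting.
Variables (X U : Type) (F : X -> U -> set X) (Q : set X) (cA : seq (set X)) (G : set X -> U).

Lemma cardP_le_size P : cardP cA P <= size cA.
Proof. by rewrite /cardP size_filter count_size. Qed.

Lemma cardP_sub (P P' : set (set X)) :
  (forall A, List.In A cA -> P A -> P' A) -> cardP cA P <= cardP cA P'.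
Proof.
move=> PP'; rewrite /cardP !size_filter.
rewrite (@eq_in_count _ _ (fun A => `[< P A >] && `[< P' A >])) ?sub_count //.
  by move=> A /andP[].
move=> A /InP A_cA; case: (asboolP (P A)) => //= /(PP' A A_cA) P'A.
by apply/esym/asboolP.
Qed.

Lemma cardP_all (P : set (set X)) :
  (forall A, List.In A cA -> P A) -> cardP cA P = size cA.
Proof.
move=> P_all; rewrite /cardP size_filter; apply/eqP; rewrite -all_count.
by apply/allP => A /InP /P_all /asboolP.
Qed.

Lemma prodP_split m S a : prodP cA m.+1 S a =
  \prod_(t < m) cardP cA (Pt cA S a t) * cardP cA (Pfull cA S).
Proof.
rewrite /prodP big_ord_recr /= /Pidx eqxx; congr (_ * _).
by apply: eq_bigr => t _; rewrite /= ltn_eqF.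
Qed.

Lemma NS_max n S a : S a -> is_max_of S (prodP cA n S) (NS cA n S).
Proof.
move=> Sa; apply: (@is_max_of_xget _ _ _ _ (\prod_(t < n) size cA)).
  by exists a.
by move=> b _; apply: leq_prod => t _; apply: cardP_le_size.
Qed.

Lemma r_inv_min n S : spanning F Q cA G n S ->
  is_min_of (spanning F Q cA G n) (NS cA n) (r_inv F Q cA G n).
Proof. by move=> S_span; apply: is_min_of_xget; exists S. Qed.

End Counting.

Section PathWeights.
Variables (X U : Type) (F : X -> U -> set X) (cA : seq (set X)) (G : set X -> U).
Local Notation D := (Dset F cA G).

Definition outdeg (A : set X) : nat := cardP cA (D A).

Fixpoint weight_from (j : nat) (A : set X) : nat :=
  if j is j'.+1 then outdeg A * \max_(B <- cA | `[< D A B >]) weight_from j' B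
  else 1.

Definition max_weight (j : nat) : nat := \max_(A <- cA) weight_from j A.

Lemma Dset_In A B : D A B -> List.In B cA.
Proof. by case. Qed.

Lemma weight_from_le_max j A : List.In A cA -> weight_from j A <= max_weight j.
Proof. by move/InP=> A_cA; apply: leq_bigmax_seq. Qed.

Lemma weight_from_le_succ j A B :
  D A B -> weight_from j B <= \max_(C <- cA | `[< D A C >]) weight_from j C.
Proof.
by move=> DAB; apply: leq_bigmax_seq; [apply/InP/(Dset_In DAB)|apply/asboolP].
Qed.

Lemma weight_fromD i j A :
  List.In A cA -> weight_from (i + j) A <= weight_from i A * max_weight j.
Proof.
elim: i A => [|i IH] A A_cA; first by rewrite mul1n weight_from_le_max.
rewrite addSn /= -mulnA leq_mul2l; apply/orP; right.
apply/bigmax_leqP_seq => B /InP B_cA /asboolP DAB.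
by apply: leq_trans (IH B B_cA) _; rewrite leq_mul2r weight_from_le_succ ?orbT.
Qed.

Lemma max_weightD i j : max_weight (i + j) <= max_weight i * max_weight j.
Proof.
apply/bigmax_leqP_seq => A /InP A_cA _; apply: leq_trans (weight_fromD i j A_cA) _.
by rewrite leq_mul2r weight_from_le_max ?orbT.
Qed.

Lemma max_weightS j : max_weight j.+1 <= size cA * max_weight j.
Proof.
apply/bigmax_leqP_seq => A _ _; apply: leq_mul; first exact: cardP_le_size.
by apply/bigmax_leqP_seq => B /InP B_cA _; apply: weight_from_le_max.
Qed.

Definition dpath (n : nat) (a : seq (set X)) : Prop :=
  [/\ size a = n, (forall A, List.In A a -> List.In A cA) &
      forall t, t.+1 < n -> D (nth set0 a t) (nth set0 a t.+1)].

Definition weight (a : seq (set X)) (j : nat) : nat :=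
  \prod_(t < j) outdeg (nth set0 a t).

Lemma dpath_consE n A a :
  dpath n.+2 (A :: a) <-> [/\ List.In A cA, D A (nth set0 a 0) & dpath n.+1 a].
Proof.
split=> [[[a_size] a_cA a_D]|[A_cA DA [a_size a_cA a_D]]].
  split; [by apply: a_cA; left|exact: (a_D 0)|split=> // [B B_a|t t_lt]].
  - by apply: a_cA; right.
  - exact: (a_D t.+1).
split; [by rewrite /= a_size|by move=> B /= [<-|/a_cA]|].
by case=> [|t] //= t_lt; apply: a_D.
Qed.

Lemma weight_cons A a j : weight (A :: a) j.+1 = outdeg A * weight a j.
Proof. by rewrite /weight big_ord_recl. Qed.

Lemma weight_le_weight_from j a :
  dpath j.+1 a -> weight a j <= weight_from j (nth set0 a 0).
Proof.
elim: j a => [|j IH] a a_path; first by rewrite /weight big_ord0.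
case: a a_path => [[]//|A a] /dpath_consE [A_cA DA a_path].
rewrite weight_cons leq_mul2l; apply/orP; right.
exact: leq_trans (IH a a_path) (weight_from_le_succ _ DA).
Qed.

Lemma dpath_take k n a : k <= n -> dpath n a -> dpath k (take k a).
Proof.
move=> k_le [a_size a_cA a_D]; split.
- by rewrite size_takel // a_size.
- by move=> A /InP/mem_take/InP/a_cA.
- move=> t t_lt; rewrite !nth_take ?(ltnW t_lt) //.
  exact/a_D/(leq_trans t_lt k_le).
Qed.

Lemma dpath_cat m k a c : dpath m.+1 a -> dpath k.+1 c ->
  D (nth set0 a m) (nth set0 c 0) -> dpath (m.+1 + k.+1) (a ++ c).
Proof.
move=> [a_size a_cA a_D] [c_size c_cA c_D] D_mid; split.
- by rewrite size_cat a_size c_size.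
- by move=> A /InP; rewrite mem_cat => /orP[/InP/a_cA|/InP/c_cA].
move=> t t_lt; rewrite !nth_cat a_size.
have [t_lt_m|t_ge_m] := ltnP t.+1 m.+1.
  by rewrite ltnW //; apply: a_D.
have [<-|t_gt_m] := eqVneq m t; first by rewrite ltnSn subnn.
rewrite !ifF ?subSn; try lia; apply: c_D; lia.
Qed.

Lemma dpaths_Pt m a t B : dpath (m.+1) a -> t < m ->
  Pt cA (dpath m.+1) a t B -> D (nth set0 a t) B.
Proof.
move=> _ t_lt [_ [b [[_ _ b_D] [b_a ->]]]].
by rewrite -(nth_take _ (ltnSn t)) -b_a nth_take //; apply: b_D.
Qed.

Hypothesis D_total : forall A, List.In A cA -> exists B, D A B.

Lemma outdeg_gt0 A : List.In A cA -> 0 < outdeg A.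
Proof.
move=> /D_total [B DAB]; rewrite /outdeg /cardP size_filter -has_count.
by apply/hasP; exists B; [apply/InP/(Dset_In DAB)|apply/asboolP].
Qed.

Lemma weight_from_gt0 j A : List.In A cA -> 0 < weight_from j A.
Proof.
elim: j A => [//|j IH] A A_cA /=; have [B DAB] := D_total A_cA.
rewrite muln_gt0 outdeg_gt0 //=.
exact: leq_trans (IH B (Dset_In DAB)) (weight_from_le_succ _ DAB).
Qed.

Lemma max_weight_gt0 j : cA != [::] -> 0 < max_weight j.
Proof.
move=> /neq_nil_In [A A_cA].
exact: leq_trans (weight_from_gt0 j A_cA) (weight_from_le_max j A_cA).
Qed.

Lemma weight_from_attained j A : List.In A cA ->
  exists a, [/\ dpath j.+1 a, nth set0 a 0 = A & weight a j = weight_from j A].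
Proof.
elim: j A => [|j IH] A A_cA.
  exists [:: A]; split => //; last by rewrite /weight big_ord0.
  by split=> // B [<-|].
have [B DAB] := D_total A_cA.
have [|B' [/InP B'_cA /asboolP DAB' max_eq]] :=
  bigmax_seq_attained (weight_from j) (P := fun B => `[< D A B >]) (r := cA).
  by apply/hasP; exists B; [apply/InP/(Dset_In DAB)|apply/asboolP].
have [a [a_path a0 a_weight]] := IH B' B'_cA.
exists (A :: a); split => //; last by rewrite weight_cons a_weight /= max_eq.
by apply/dpath_consE; rewrite a0.
Qed.

Lemma dpath_extend n a t B : dpath n a -> t.+1 < n -> D (nth set0 a t) B ->
  exists b, [/\ dpath n b, take t.+1 b = take t.+1 a & nth set0 b t.+1 = B].
Proof.
move=> a_path t_lt DB.
have [c [c_path c0 _]] := weight_from_attained (n - t.+2) (Dset_In DB).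
have a_size : size a = n by case: a_path.
have take_size : size (take t.+1 a) = t.+1 by rewrite size_takel // a_size ltnW.
exists (take t.+1 a ++ c); split.
- have -> : n = t.+1 + (n - t.+2).+1 by lia.
  apply: dpath_cat; [exact: dpath_take (ltnW t_lt) a_path|exact: c_path|].
  by rewrite nth_take // c0.
- by rewrite take_size_cat.
- by rewrite nth_cat take_size ltnn subnn.
Qed.

End PathWeights.

Definition private_point (X : Type) (cA : seq (set X)) (A : set X) (x : X) : Prop :=
  A x /\ forall B, List.In B cA -> B x -> B = A.

Section QuasiInvariantPartition.
Variables (X U : Type) (F : X -> U -> set X) (Q : set X) (cA : seq (set X)) (G : set X -> U).
Local Notation D := (Dset F cA G).
Hypothesis qip : quasi_invariant_partition F Q cA G.

Lemma qip_private_point A : List.In A cA -> exists x, private_point cA A x.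
Proof.
case: qip => _ A_private _ /A_private [x [Ax x_notin]]; exists x; split => // B B_cA Bx.
by apply: contrapT => BA; apply: x_notin; exists B.
Qed.

Lemma qip_private_succ A B : List.In A cA -> D A B ->
  exists2 x, Fset F A (G A) x & private_point cA B x.
Proof.
case: qip => _ _ B_private A_cA DAB.
have [x [FAx [Bx x_notin]]] := B_private A B A_cA DAB.
exists x => //; split => // C C_cA Cx; apply: contrapT => CB; apply: x_notin.
by exists C => //; split => //; split => //; exists x.
Qed.

Lemma spanning_Pfull n S :
  spanning F Q cA G n S -> forall A, List.In A cA -> Pfull cA S A.
Proof.
case=> _ Q_cov _ A A_cA; have [[_ A_Q _ _] _ _] := qip.
have [p [Ap p_private]] := qip_private_point A_cA.
have [B PB Bp] := Q_cov p (A_Q A A_cA p Ap).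
by rewrite -(p_private B PB.1 Bp).
Qed.

Lemma spanning_Pt n S a t B : spanning F Q cA G n S -> S a -> t < n.-1 ->
  D (nth set0 a t) B -> Pt cA S a t B.
Proof.
case=> S_path _ S_succ Sa t_lt DB.
have at_cA : List.In (nth set0 a t) cA.
  have [a_size a_cA] := S_path a Sa.
  by apply/a_cA/InP/mem_nth; rewrite a_size; lia.
have [x FAx [Bx x_private]] := qip_private_succ at_cA DB.
have [C PC Cx] := S_succ a t Sa t_lt x FAx.
by rewrite -(x_private C PC.1 Cx).
Qed.

Lemma spanning_dpath n S a :
  spanning F Q cA G n.+1 S -> dpath F cA G n.+1 a -> S a.
Proof.
move=> S_span a_path; have [S_path _ _] := S_span; have [a_size a_cA a_D] := a_path.
have S_size b : S b -> size b = n.+1 by case/S_path.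
suff prefix k : k <= n -> exists b, S b /\ take k.+1 b = take k.+1 a.
  have [b [Sb b_a]] := prefix n (leqnn n).
  by rewrite -[a]take_size a_size -b_a -(S_size b Sb) take_size.
have take_succ b i : S b -> i <= n -> take i b = take i a ->
    nth set0 b i = nth set0 a i -> take i.+1 b = take i.+1 a.
  move=> Sb i_le b_a bi; rewrite (take_nth set0) ?S_size // b_a bi.
  by rewrite -take_nth // a_size.
elim: k => [_|t IH t_lt].
  have a0_cA : List.In (nth set0 a 0) cA by apply/a_cA/InP/mem_nth; rewrite a_size.
  have [_ [b [Sb b0]]] := spanning_Pfull S_span a0_cA.
  by exists b; split => //; apply: take_succ; rewrite ?take0.
have [b [Sb b_a]] := IH (ltnW t_lt).
have bt : nth set0 b t = nth set0 a t.
  by rewrite -(nth_take _ (ltnSn t)) b_a nth_take.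
have DB : D (nth set0 b t) (nth set0 a t.+1) by rewrite bt; apply: a_D.
have [_ [b' [Sb' [b'_b b'_t]]]] := spanning_Pt S_span Sb t_lt DB.
exists b'; split => //; apply: take_succ => //; first by rewrite b'_b.
Qed.

Hypothesis F_nonempty : forall x u, F x u !=set0.

Lemma qip_succ_exists A : List.In A cA -> exists B, D A B.
Proof.
move=> A_cA; have [[_ _ Q_cov FQ] _ _] := qip.
have [p [Ap _]] := qip_private_point A_cA.
have [y Fy] := F_nonempty p (G A).
have FAy : Fset F A (G A) y by exists p.
have [B B_cA By] := Q_cov y (FQ A A_cA y FAy).
by exists B; split => //; exists y.
Qed.

Lemma dpaths_spanning m : spanning F Q cA G m.+1 (dpath F cA G m.+1).
Proof.
have [[_ _ Q_cov FQ] _ _] := qip; split.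
- by move=> a [].
- move=> x Qx; have [A A_cA Ax] := Q_cov x Qx.
  have [a [a_path a0 _]] := weight_from_attained qip_succ_exists m A_cA.
  by exists A => //; split => //; exists a; rewrite a0.
- move=> a t a_path t_lt x FAx; have [a_size a_cA _] := a_path.
  have at_cA : List.In (nth set0 a t) cA.
    by apply/a_cA/InP/mem_nth; rewrite a_size; lia.
  have [B B_cA Bx] := Q_cov x (FQ _ at_cA x FAx).
  have DB : D (nth set0 a t) B by split => //; exists x.
  have [b [b_path b_a bt]] := dpath_extend qip_succ_exists a_path t_lt DB.
  by exists B => //; split => //; exists b.
Qed.

Lemma NS_dpaths_le m : cA != [::] ->
  NS cA m.+1 (dpath F cA G m.+1) <= size cA * max_weight F cA G m.
Proof.
move=> /neq_nil_In [A A_cA].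
have [a0 [a0_path _ _]] := weight_from_attained qip_succ_exists m A_cA.
have [[a [a_path ->]] _] := NS_max cA m.+1 a0_path.
rewrite prodP_split mulnC leq_mul ?cardP_le_size //.
have [a_size a_cA _] := a_path.
have a0_cA : List.In (nth set0 a 0) cA by apply/a_cA/InP/mem_nth; rewrite a_size.
apply: leq_trans _ (weight_from_le_max F G m a0_cA).
apply: leq_trans _ (weight_le_weight_from a_path).
apply: leq_prod => t _.
by apply: cardP_sub => B _; apply: dpaths_Pt a_path (ltn_ord t).
Qed.

Lemma max_weight_le_NS m S : cA != [::] -> spanning F Q cA G m.+1 S ->
  size cA * max_weight F cA G m <= NS cA m.+1 S.
Proof.
move=> cA_ne S_span.
have [|A [/InP A_cA _ A_max]] :=
  bigmax_seq_attained (weight_from F cA G m) (P := fun _ => true) (r := cA).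
  by rewrite has_predT lt0n size_eq0.
have [a [a_path _ a_weight]] := weight_from_attained qip_succ_exists m A_cA.
have Sa := spanning_dpath S_span a_path.
have [_ NS_ge] := NS_max cA m.+1 Sa.
apply: leq_trans _ (NS_ge a Sa).
rewrite prodP_split /max_weight A_max -a_weight (cardP_all (spanning_Pfull S_span)).
rewrite mulnC leq_mul2r; apply/orP; right; apply: leq_prod => t _.
by apply: cardP_sub => B _; apply: spanning_Pt S_span Sa (ltn_ord t).
Qed.

Lemma r_invS m : cA != [::] -> r_inv F Q cA G m.+1 = size cA * max_weight F cA G m.
Proof.
move=> cA_ne; have [[S [S_span ->]] r_min] := r_inv_min (dpaths_spanning m).
apply/eqP; rewrite eqn_leq max_weight_le_NS // andbT.
exact: leq_trans (r_min _ (dpaths_spanning m)) (NS_dpaths_le m cA_ne).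
Qed.

Lemma r_inv_gt0 n : cA != [::] -> 0 < n -> 0 < r_inv F Q cA G n.
Proof.
move=> cA_ne; case: n => // m _; rewrite r_invS // muln_gt0 lt0n size_eq0 cA_ne.
exact: max_weight_gt0 qip_succ_exists m cA_ne.
Qed.

Lemma r_inv_submultiplicative : cA != [::] -> submultiplicative (r_inv F Q cA G).
Proof.
move=> cA_ne [//|i] [//|j] _ _; rewrite addSn !r_invS // -mulnA leq_mul2l.
apply/orP; right; apply: leq_trans (max_weightD _ _ _ i j.+1) _.
by rewrite leq_mul2l max_weightS orbT.
Qed.

End QuasiInvariantPartition.

Lemma h_inv_le_of_max_weight (R : realType) (X U : Type) (F : X -> U -> set X)
    (Q : set X) (cA cA' : seq (set X)) (G G' : set X -> U) :
  (forall x u, F x u !=set0) ->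
  quasi_invariant_partition F Q cA G -> quasi_invariant_partition F Q cA' G' ->
  cA != [::] -> cA' != [::] -> size cA' <= size cA ->
  (forall m, max_weight F cA' G' m <= max_weight F cA G m) ->
  (h_inv F Q R cA' G' <= h_inv F Q R cA G)%R.
Proof.
move=> F_nonempty qip qip' cA_ne cA'_ne size_le weight_le.
apply: (@log2_rate_lim_le R (r_inv F Q cA G) (r_inv F Q cA' G')).
- by move=> n; apply: r_inv_gt0.
- exact: r_inv_submultiplicative.
- by move=> n; apply: r_inv_gt0.
- exact: r_inv_submultiplicative.
- by move=> [//|m] _; rewrite !r_invS // leq_mul.
Qed.

Lemma invariant_partition_qip (X U : Type) (F : X -> U -> set X) (Q : set X)
    (cA : seq (set X)) (G : set X -> U) :
  invariant_partition F Q cA G -> quasi_invariant_partition F Q cA G.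
Proof.
case=> cover nonempty disjoint.
have block_eq A B x : List.In A cA -> List.In B cA -> A x -> B x -> A = B.
  move=> A_cA B_cA Ax Bx; apply: contrapT => AB.
  by have := disjoint A B A_cA B_cA AB; rewrite -subset0 => /(_ x); apply.
split=> // [A A_cA|A B _ [B_cA [y [FAy By]]]].
  have [x Ax] := nonempty A A_cA; exists x; split => // -[B [B_cA BA] Bx].
  exact/BA/(block_eq B A x).
exists y; split => //; split => // -[C [[C_cA _] CB] Cy].
exact/CB/(block_eq C B y).
Qed.

Section Cores.
Variables (X U : Type) (F : X -> U -> set X) (Q : set X) (cA : seq (set X)) (G : set X -> U).
Hypothesis qip : quasi_invariant_partition F Q cA G.

Definition block_of (x : X) : set X := xget set0 [set A | List.In A cA /\ A x].

Definition core (A : set X) : set X := [set x | A x /\ block_of x = A].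

Definition cores : seq (set X) := map core cA.

Definition core_control (B : set X) : U :=
  G (xget set0 [set A | List.In A cA /\ core A = B]).

Lemma block_ofP x A : List.In A cA -> A x -> List.In (block_of x) cA /\ block_of x x.
Proof.
by move=> A_cA Ax; apply: (xgetPex set0 (P := [set A | List.In A cA /\ A x])); exists A.
Qed.

Lemma core_sub A : core A `<=` A.
Proof. by move=> x []. Qed.

Lemma core_private A x : List.In A cA -> private_point cA A x -> core A x.
Proof.
move=> A_cA [Ax x_private]; split => //.
by have [b_cA bx] := block_ofP A_cA Ax; apply: x_private.
Qed.

Lemma core_block A B x : core A x -> core B x -> A = B.
Proof. by move=> [_ <-] [_ <-]. Qed.

Lemma core_inj A B : List.In A cA -> List.In B cA -> core A = core B -> A = B.
Proof.
move=> A_cA B_cA AB; have [p p_private] := qip_private_point qip A_cA.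
have := core_private A_cA p_private; rewrite AB => /core_sub Bp.
by rewrite (p_private.2 B B_cA Bp).
Qed.

Lemma core_control_core A : List.In A cA -> core_control (core A) = G A.
Proof.
move=> A_cA; rewrite /core_control.
have [A'_cA A'A] := xgetPex set0 (P := [set A' | List.In A' cA /\ core A' = core A])
  (ex_intro _ A (conj A_cA erefl)).
by rewrite (core_inj A'_cA A_cA A'A).
Qed.

Lemma Fset_core A u : Fset F (core A) u `<=` Fset F A u.
Proof. by apply: bigcup_subset; apply: core_sub. Qed.

Lemma Dset_cores A B : List.In A cA -> List.In B cA ->
  Dset F cores core_control (core A) (core B) -> Dset F cA G A B.
Proof.
move=> A_cA B_cA [_ [y [FAy By]]]; split => //; exists y; split.
  by rewrite core_control_core // in FAy; apply: Fset_core FAy.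
exact: core_sub By.
Qed.

Lemma cores_partition : invariant_partition F Q cores core_control.
Proof.
have [[nodup cA_Q Q_cov FQ] _ _] := qip; split; first split.
- apply: List.NoDup_map_NoDup_ForallPairs nodup => A B A_cA B_cA.
  exact: core_inj.
- by move=> _ /InP/mapP [A /InP A_cA ->] x /core_sub; apply: cA_Q.
- move=> x Qx; have [A A_cA Ax] := Q_cov x Qx; have [b_cA bx] := block_ofP A_cA Ax.
  by exists (core (block_of x)); [apply/InP/map_f/InP|split].
- move=> _ /InP/mapP [A /InP A_cA ->]; rewrite core_control_core //.
  exact: subset_trans (@Fset_core A (G A)) (FQ A A_cA).
- move=> _ /InP/mapP [A /InP A_cA ->]; have [x x_private] := qip_private_point qip A_cA.
  by exists x; apply: core_private.
- move=> _ _ /InP/mapP [A _ ->] /InP/mapP [B _ ->] AB.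
  by rewrite -subset0 => x [xA xB]; apply: AB; rewrite (core_block xA xB).
Qed.

Lemma weight_from_cores j A : List.In A cA ->
  weight_from F cores core_control j (core A) <= weight_from F cA G j A.
Proof.
elim: j A => [//|j IH] A A_cA /=; apply: leq_mul.
  rewrite /outdeg /cardP /cores filter_map size_map.
  by apply: cardP_sub => B B_cA /(Dset_cores A_cA B_cA).
apply/bigmax_leqP_seq => _ /mapP [B /InP B_cA ->] /asboolP D'AB.
exact: leq_trans (IH B B_cA) (weight_from_le_succ _ (Dset_cores A_cA B_cA D'AB)).
Qed.

Lemma max_weight_cores j : max_weight F cores core_control j <= max_weight F cA G j.
Proof.
apply/bigmax_leqP_seq => _ /mapP [A /InP A_cA ->] _.
exact: leq_trans (weight_from_cores j A_cA) (weight_from_le_max F G j A_cA).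
Qed.

End Cores.

Local Open Scope ring_scope.

Theorem corollary3p4 (R : realType) (X U : Type) (F : X -> U -> set X)
  (HF : forall x u, F x u !=set0) (Q : set X)
  (HQ : controlled_invariant F Q)
  (cA : seq (set X)) (G : set X -> U)
  (HAG : quasi_invariant_partition F Q cA G) :
  exists (cA' : seq (set X)) (G' : set X -> U),
    [/\ invariant_partition F Q cA' G',
        size cA = size cA' &
        h_inv F Q R cA' G' <= h_inv F Q R cA G].
Proof.
have [cA_nil|cA_ne] := eqVneq cA [::].
  subst cA; exists [::], G; split => //.
  by have [cover _ _] := HAG; split=> // [A []|A B []].
have cores_ne : cores cA != [::] by rewrite -size_eq0 size_map size_eq0.
have cores_qip := invariant_partition_qip (cores_partition HAG).
exists (cores cA), (core_control cA G); split.
- exact: cores_partition.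
- by rewrite size_map.
- apply: (h_inv_le_of_max_weight R HF HAG cores_qip cA_ne cores_ne).
  + by rewrite size_map.
  + exact: max_weight_cores HAG.
Qed.
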